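(* Let $A$ be a formula and $\Gamma$ an irreducible context that is a maximal decomposition of $A$. Then for every context $\Delta$ and formula $B$, the sequent $A,\Delta\vdash B$ is derivable if and only if $\Gamma,\Delta\vdash B$ is derivable.
   Context: Formulas are built from atoms ($p,q,\dots$) by a binary product: every formula is an atom or $A\bullet B$. A context is a finite (possibly empty) list of formulas; commas denote concatenation; a context is irreducible if its leftmost formula is not a product. The sequent calculus has exactly four rules (no weakening, contraction or exchange): ($\bullet L$) from $A,B,\Delta\vdash C$ infer $A\bullet B,\Delta\vdash C$ (the product must be leftmost); ($\bullet R$) from $\Gamma\vdash A$ and $\Delta\vdash B$ infer $\Gamma,\Delta\vdash A\bullet B$; ($id$) $A\vdash A$; ($cut$) from $\Theta\vdash A$ and $\Gamma,A,\Delta\vdash B$ infer $\Gamma,\Theta,\Delta\vdash B$; derivable means conclusion of a finite derivation tree with no undischarged premises. The substitution order on contexts is the least relation $\le$ such that: (1) if $\Gamma\vdash A$ is derivable then $\Gamma\le A$ (one-element context); (2) $\cdot\le\cdot$ for the empty context; (3) if $\Gamma_1\le\Gamma_2$ and $\Theta_1\le\Theta_2$ then $(\Gamma_1,\Theta_1)\le(\Gamma_2,\Theta_2)$. An irreducible context $\Gamma$ is a maximal decomposition of $A$ if $\Gamma\vdash A$ is derivable and for every irreducible context $\Theta$ with $\Theta\vdash A$ derivable, $\Theta\le\Gamma$. *)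

From Stdlib Require Import List.
Import ListNotations.

Inductive formula : Type :=
| Atom : nat -> formula
| Prod : formula -> formula -> formula.

(* Contexts: finite lists of formulas; comma = list append. *)
Definition context := list formula.

Inductive derivable : context -> formula -> Prop :=
| d_prodL : forall A B Delta C,
    derivable (A :: B :: Delta) C -> derivable (Prod A B :: Delta) C
| d_prodR : forall Gamma Delta A B,
    derivable Gamma A -> derivable Delta B -> derivable (Gamma ++ Delta) (Prod A B)
| d_id : forall A, derivable [A] A
| d_cut : forall Theta Gamma Delta A B,
    derivable Theta A -> derivable (Gamma ++ A :: Delta) B ->
    derivable (Gamma ++ Theta ++ Delta) B.

Definition irreducible (Gamma : context) : Prop :=
  match Gamma with
  | Prod _ _ :: _ => False
  | _ => True
  end.

Inductive subst_le : context -> context -> Prop :=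
| sle_der : forall Gamma A, derivable Gamma A -> subst_le Gamma [A]
| sle_nil : subst_le [] []
| sle_app : forall G1 G2 T1 T2,
    subst_le G1 G2 -> subst_le T1 T2 -> subst_le (G1 ++ T1) (G2 ++ T2).

Definition max_decomposition (Gamma : context) (A : formula) : Prop :=
  irreducible Gamma /\ derivable Gamma A /\
  forall Theta, irreducible Theta -> derivable Theta A -> subst_le Theta Gamma.

(* Cutting against Gamma |- A gives one direction. For the other, repeatedly
   applying (•L) to A unfolds it into an irreducible context that still derives
   A; maximality places this context below Gamma in the substitution order, and
   contexts lower in that order can replace higher ones on the left of any
   derivable sequent. *)

From Stdlib Require Import List.
Import ListNotations.

Lemma derivable_subst_le (X Y : context) :
  subst_le X Y ->
  forall L R B, derivable (L ++ Y ++ R) B -> derivable (L ++ X ++ R) B.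
Proof.
  induction 1 as [X A HXA | | X1 Y1 X2 Y2 _ IH1 _ IH2]; intros L R B HY.
  - now apply d_cut with (A := A).
  - exact HY.
  - rewrite <- app_assoc.
    apply IH1; rewrite app_assoc.
    apply IH2; rewrite <- !app_assoc.
    now rewrite <- app_assoc in HY.
Qed.

Fixpoint left_unfold (A : formula) : context :=
  match A with
  | Atom p => [Atom p]
  | Prod A1 A2 => left_unfold A1 ++ [A2]
  end.

Lemma left_unfold_head_atom (A : formula) :
  exists p l, left_unfold A = Atom p :: l.
Proof.
  induction A as [p | A1 [p [l E]] A2 _]; simpl.
  - eauto.
  - rewrite E; simpl; eauto.
Qed.

Lemma left_unfold_irreducible (A : formula) : irreducible (left_unfold A).
Proof.
  destruct (left_unfold_head_atom A) as [p [l E]].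
  now rewrite E.
Qed.

Lemma derivable_left_unfold (A : formula) : derivable (left_unfold A) A.
Proof.
  induction A as [p | A1 IH1 A2 _]; simpl.
  - apply d_id.
  - apply d_prodR; [exact IH1 | apply d_id].
Qed.

Lemma derivable_fold_left_unfold (A : formula) (Delta : context) (B : formula) :
  derivable (left_unfold A ++ Delta) B -> derivable (A :: Delta) B.
Proof.
  revert Delta.
  induction A as [p | A1 IH1 A2 _]; intros Delta H; simpl in H.
  - exact H.
  - apply d_prodL, IH1.
    rewrite <- app_assoc in H.
    exact H.
Qed.

Theorem proposition2p4 (A : formula) (Gamma : context) :
  irreducible Gamma -> max_decomposition Gamma A ->
  forall (Delta : context) (B : formula),
    derivable (A :: Delta) B <-> derivable (Gamma ++ Delta) B.
Proof.
  intros _ [_ [HGamma Hmax]] Delta B.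
  split; intro H.
  - exact (d_cut Gamma [] Delta A B HGamma H).
  - apply derivable_fold_left_unfold.
    assert (Hle : subst_le (left_unfold A) Gamma)
      by exact (Hmax _ (left_unfold_irreducible A) (derivable_left_unfold A)).
    exact (derivable_subst_le _ _ Hle [] Delta B H).
Qed.
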